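(* Let $G$ be a compact group and let $x\in G$ be an element such that $Pr(\langle x\rangle,G)>0$. Then there is a positive integer $e$ such that $x^e$ is contained in an abstract (not necessarily closed) subgroup $N$ of $G$ which is torsion-free, abelian, normal in $G$, and contained in $FC(G)$.
   Context: For a closed subgroup $H$ of a compact group $G$, $Pr(H,G)=(\mu_H\times\mu_G)(\{(h,g)\in H\times G: hg=gh\})$, where $\mu_H,\mu_G$ are the normalized Haar measures. $\langle x\rangle$ is the closed subgroup topologically generated by $x$. $FC(G)$ denotes the set of all elements $y\in G$ whose centralizer $C_G(y)$ has finite index in $G$ (an abstract subgroup of $G$). *)

From HB Require Import structures.
From mathcomp Require Import all_boot all_order all_algebra.
From mathcomp Require Import all_classical all_reals all_analysis.
Set Implicit Arguments. Unset Strict Implicit. Unset Printing Implicit Defensive.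
Import Order.TTheory GRing.Theory Num.Theory.
Local Open Scope classical_set_scope.
Local Open Scope ring_scope.

Record compact_group (G : ptopologicalType) := CompactGroup {
  gmul : G -> G -> G;
  ginv : G -> G;
  gone : G;
  gmulA : forall a b c, gmul a (gmul b c) = gmul (gmul a b) c;
  gmul1 : forall a, gmul gone a = a;
  gmulV : forall a, gmul (ginv a) a = gone;
  gmul_cont : continuous (fun p : G * G => gmul p.1 p.2);
  ginv_cont : continuous ginv;
  g_compact : compact [set: G];
  g_hausdorff : hausdorff_space G
}.

Section defs.
Variables (G : ptopologicalType) (cg : compact_group G).
Local Notation "a * b" := (gmul cg a b).

Fixpoint gpow (x : G) (n : nat) : G :=
  match n with O => gone cg | S m => x * gpow x m end.

Definition cyc (x : G) : set G :=
  [set y | exists n : nat, y = gpow x n \/ y = ginv cg (gpow x n)].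

(* <x> : the closed subgroup topologically generated by x *)
Definition topgen (x : G) : set G := closure (cyc x).

Definition centralizer (y : G) : set G := [set g | y * g = g * y].

(* FC(G): elements whose centralizer has finite index (finitely many
   left cosets g C_G(y)) *)
Definition FC : set G :=
  [set y | exists s : seq G,
      forall g : G, exists2 t, t \in s & centralizer y (ginv cg t * g)].

Definition abstract_subgroup (N : set G) : Prop :=
  [/\ N (gone cg),
      (forall a b, N a -> N b -> N (a * b)) &
      (forall a, N a -> N (ginv cg a))].

Definition torsion_free (N : set G) : Prop :=
  forall y n, N y -> (0 < n)%N -> gpow y n = gone cg -> y = gone cg.

Definition abelian_set (N : set G) : Prop :=
  forall a b, N a -> N b -> a * b = b * a.

Definition normal_in_G (N : set G) : Prop :=
  forall g a, N a -> N (g * a * ginv cg g).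

Definition Borel := g_sigma_algebraType (@open G).

Variable R : realType.

(* mu is a (normalized) Haar measure of the closed subgroup H, viewed as a
   Radon probability measure on G concentrated on H and invariant under left
   translation by elements of H. *)
Definition haar_of (H : set G) (mu : probability Borel R) : Prop :=
  [/\ mu H = 1%E,
      (forall h (A : set Borel), H h -> measurable A ->
          mu [set h * a | a in A] = mu A),
      (forall A : set Borel, measurable A ->
          mu A = ereal_inf [set mu U | U in [set U : set G | open U /\ A `<=` U]]) &
      (forall U : set G, open U ->
          mu U = ereal_sup [set mu K | K in [set K : set G | compact K /\ K `<=` U]])].

(* Pr(H,G) = (mu_H x mu_G){(h,g) | hg = gh} computed as the iterated
   (Fubini) integral  int_H mu_G(C_G(h)) d mu_H(h). *)
Definition comm_prob (muH muG : probability Borel R) : \bar R :=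
  (\int[muH]_(h in [set: Borel]) muG (centralizer h : set Borel))%E.

End defs.

From HB Require Import structures.
From mathcomp Require Import all_boot all_order all_algebra.
From mathcomp Require Import all_classical all_reals all_analysis.
Set Implicit Arguments. Unset Strict Implicit. Unset Printing Implicit Defensive.
Import Order.TTheory GRing.Theory Num.Theory.
Import HBNNSimple.
Local Open Scope classical_set_scope.

(* If Pr(<x>,G) > 0, the function h |-> mu_G(C_G(h)) is at least some rho > 0 on
   a set B of positive Haar measure in <x>.  An element whose centralizer has
   measure >= rho cannot have infinitely many disjoint left cosets of it, so
   B is contained in FC(G); and the translates x^i B cannot be pairwise disjoint,
   so some x^e with e > 0 lies in B B^-1, a subset of FC(G).
   For y in FC(G) the conjugacy class of y is finite, so a power z = y^d
   commutes with all of its conjugates.  The conjugates of z and their inverses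
   generate a finitely generated abelian normal subgroup A of FC(G); if M kills
   the torsion of A, then N = A^M is torsion-free and contains y^(dM). *)

Section FiniteConjugacyClasses.
Variable gT : groupType.
Implicit Types (a b c d g h u w y z : gT) (A N : set gT) (l : seq gT).
Local Open Scope group_scope.

Definition fc y : Prop :=
  exists s : seq gT, forall g, exists2 t, t \in s & commute y (t^-1 * g).

Lemma commute_conjgE x y : commute x y <-> x ^ y = x.
Proof. by split=> [/commgP/conjg_fixP | /conjg_fixP/commgP]. Qed.

Lemma commuteVl x y : commute x y -> commute x^-1 y.
Proof. by move/commute_sym/commuteV/commute_sym. Qed.

Lemma commuteJ a b g : commute a b -> commute (a ^ g) (b ^ g).
Proof. by rewrite /commute -!conjMg => ->. Qed.

Lemma fc_class y : fc y -> exists K : seq gT, forall k, k \in K <-> exists g, k = y ^ g.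
Proof.
case=> s hs; exists [seq y ^ t^-1 | t <- s] => k; split.
  by case/mapP=> t _ ->; exists t^-1.
case=> g ->; have [t ts /commute_conjgE ht] := hs g^-1.
by apply/mapP; exists t => //; rewrite -[in LHS]ht conjgM conjgKV.
Qed.

Lemma fc_of_class y (K : seq gT) : (forall g, y ^ g \in K) -> fc y.
Proof.
move=> yK; pose rep k := xget 1 [set u | y ^ u = k].
have repP g : y ^ rep (y ^ g) = y ^ g := @xgetI _ 1 [set u | y ^ u = y ^ g] g erefl.
exists [seq (rep k)^-1 | k <- K] => g; exists (rep (y ^ g^-1))^-1; first exact: map_f.
by apply/commute_conjgE; rewrite invgK conjgM repP conjgKV.
Qed.

Lemma fc1 : fc 1.
Proof. by apply: (@fc_of_class _ [:: 1]) => g; rewrite conj1g mem_seq1. Qed.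

Lemma fcM a b : fc a -> fc b -> fc (a * b).
Proof.
move=> /fc_class[Ka hKa] /fc_class[Kb hKb].
apply: (@fc_of_class _ [seq u * v | u <- Ka, v <- Kb]) => g.
by rewrite conjMg; apply: allpairs_f; [apply/hKa | apply/hKb]; exists g.
Qed.

Lemma fcV y : fc y -> fc y^-1.
Proof.
move=> /fc_class[K hK]; apply: (@fc_of_class _ [seq k^-1 | k <- K]) => g.
by rewrite conjVg; apply: map_f; apply/hK; exists g.
Qed.

Lemma fcJ y h : fc y -> fc (y ^ h).
Proof.
move=> /fc_class[K hK]; apply: (@fc_of_class _ K) => g.
by apply/hK; exists (h * g); rewrite conjgM.
Qed.

Lemma fcX y n : fc y -> fc (y ^+ n).
Proof. by move=> fy; elim: n => [|n IH]; rewrite ?expgS; [exact: fc1 | exact: fcM]. Qed.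

Lemma fc_commuteX y a : fc y -> exists2 d, 0 < d & commute y (a ^+ d).
Proof.
move=> /fc_class[K hK]; pose orb := [seq y ^ (a ^+ i) | i <- iota 0 (size K).+1].
have /(uniqPn 1)[i [j [ij]]] : ~~ uniq orb.
  apply/negP => /uniq_leq_size orbK.
  have : size orb <= size K by apply: orbK => _ /mapP[i _ ->]; apply/hK; exists (a ^+ i).
  by rewrite size_map size_iota ltnn.
rewrite size_map size_iota => jK; rewrite !(nth_map 0) ?size_iota ?(ltn_trans ij) //.
rewrite !nth_iota ?(ltn_trans ij) // !add0n -(subnK (ltnW ij)) expgnDr conjgM.
by move=> /conjg_inj/esym/commute_conjgE yC; exists (j - i); rewrite ?subn_gt0.
Qed.

Lemma fc_commuteX_seq (ws : seq gT) a : (forall w, w \in ws -> fc w) ->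
  exists2 d, 0 < d & forall w, w \in ws -> commute w (a ^+ d).
Proof.
elim: ws => [|w ws IH] fcws; first by exists 1%N.
have [d1 d1_gt0 wC] := fc_commuteX a (fcws w (mem_head w ws)).
have [d2 d2_gt0 wsC] := IH (fun u uws => fcws u (mem_behead (s := w :: ws) uws)).
exists (d1 * d2)%N; first by rewrite muln_gt0 d1_gt0.
move=> u; rewrite inE => /predU1P[->|uws]; first by rewrite expgnA; exact: commuteX.
by rewrite mulnC expgnA; apply: commuteX; apply: wsC.
Qed.

Lemma not_fc_distinct_cosets y : ~ fc y ->
  exists g : nat -> gT, forall i j, i != j -> ~ commute y ((g i)^-1 * g j).
Proof.
move=> nfc.
have /choice[next nextP] : forall s : seq gT,
    exists g, forall t, t \in s -> ~ commute y (t^-1 * g).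
  move=> s; apply: contrapT => /forallNP hs; apply: nfc; exists s => g.
  by have /existsNP[t /not_implyP[ts /contrapT]] := hs g; exists t.
pose prefix := fix prefix n := if n is m.+1 then next (prefix m) :: prefix m else [::].
have prefixP i j : i < j -> next (prefix i) \in prefix j.
  elim: j => // j IH; rewrite ltnS leq_eqVlt inE => /predU1P[->|/IH->];
    by rewrite ?eqxx ?orbT.
exists (fun i => next (prefix i)) => i j.
rewrite neq_ltn => /orP[ij | ji]; first exact: nextP _ _ (prefixP i j ij).
by move=> /commuteV; rewrite invgM invgK; apply: nextP _ _ (prefixP j i ji).
Qed.

Lemma fc_exp_of_quotient a i j : i != j -> fc ((a ^+ i)^-1 * a ^+ j) ->
  exists2 e, 0 < e & fc (a ^+ e).
Proof.
have step m n : m < n -> fc ((a ^+ m)^-1 * a ^+ n) -> exists2 e, 0 < e & fc (a ^+ e).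
  move=> mn; rewrite -(subnKC (ltnW mn)) expgnDr mulKg => fq.
  by exists (n - m); rewrite ?subn_gt0.
rewrite neq_ltn => /orP[/step //| ji /fcV]; rewrite invgM invgK; exact: step.
Qed.

Lemma translate_meet g h A :
  [set g * a | a in A] `&` [set h * a | a in A] !=set0 ->
  exists a b, [/\ A a, A b & g^-1 * h = a * b^-1].
Proof.
case=> _ [[a Aa <-] [b Ab hb]]; exists a, b; split => //.
by rewrite -(mulgK b h) hb -mulgA mulKg.
Qed.

(* For a commuting [l], the submonoid generated by [l]. *)
Fixpoint powprod l : set gT :=
  if l is w :: l' then [set a | exists i, exists2 b, powprod l' b & a = w ^+ i * b]
  else [set 1].

Definition commuting l := {in l &, forall u v, commute u v}.

Lemma commuting_cons w l :
  commuting (w :: l) -> commuting l /\ forall u, u \in l -> commute w u.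
Proof.
move=> wlC; split=> [u v ul vl | u ul]; apply: wlC;
  by rewrite inE ?eqxx ?ul ?vl ?orbT.
Qed.

Lemma powprod_min (S : set gT) l : S 1 -> (forall a b, S a -> S b -> S (a * b)) ->
  (forall w, w \in l -> S w) -> powprod l `<=` S.
Proof.
move=> S1 SM; elim: l => [_ a -> //|w l IH Sl a [i [b lb ->]]].
apply: (SM); last by apply: IH lb => u ul; apply: Sl; rewrite inE ul orbT.
have Sw : S w by apply: Sl; rewrite mem_head.
by elim: i => [|i IHi]; rewrite ?expgS; [exact: S1 | exact: SM].
Qed.

Lemma powprod1 l : powprod l 1.
Proof. by elim: l => [|w l IH] //=; exists 0%N; exists 1; rewrite ?mulg1. Qed.

Lemma powprod_mem l w : w \in l -> powprod l w.
Proof.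
elim: l => [|u l IH] //; rewrite inE => /predU1P[->|/IH lw].
  by exists 1%N; exists 1; [exact: powprod1 | rewrite mulg1].
by exists 0%N; exists w; rewrite ?mul1g.
Qed.

Lemma commute_powprod c l : (forall w, w \in l -> commute c w) ->
  forall a, powprod l a -> commute c a.
Proof. by move=> cl; apply: powprod_min => //; [exact: commute1 | exact: commuteM]. Qed.

Lemma powprod_commute l :
  commuting l -> forall a b, powprod l a -> powprod l b -> commute a b.
Proof.
move=> lC a b la lb; apply/commute_sym; apply: commute_powprod la => w wl.
by apply/commute_sym; apply: commute_powprod lb => u ul; apply: lC.
Qed.

Lemma powprodM l :
  commuting l -> forall a b, powprod l a -> powprod l b -> powprod l (a * b).
Proof.
elim: l => [|w l IH] wlC a b; first by move=> /= -> ->; rewrite mulg1.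
have [lC wC] := commuting_cons wlC.
move=> [i [a' la' ->]] [j [b' lb' ->]].
exists (i + j)%N; exists (a' * b'); first exact: IH.
have a'w : commute a' (w ^+ j).
  by apply: commuteX; apply/commute_sym; apply: commute_powprod la'.
by rewrite expgnDr -!mulgA; congr (_ * _); rewrite !mulgA a'w.
Qed.

Lemma powprodX l n : commuting l -> forall a, powprod l a -> powprod l (a ^+ n).
Proof.
move=> lC a la; elim: n => [|n IH]; first exact: powprod1.
by rewrite expgS; apply: powprodM.
Qed.

(* For an abelian subgroup [A]: [M] annihilates the torsion of [A]. *)
Definition kills_torsion A (M : nat) : Prop :=
  forall a b n, A a -> A b -> 0 < n -> a ^+ n = b ^+ n -> a ^+ M = b ^+ M.

Lemma powprod_cons_root w l r c d : commuting (w :: l) ->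
  powprod l c -> powprod l d -> w ^+ r * c = d ->
  forall i a, powprod l a -> powprod l ((w ^+ i * a) ^+ r * c ^+ i).
Proof.
move=> wlC lc ld wcd i a la; have [lC wC] := commuting_cons wlC.
have wX b n : powprod l b -> commute (w ^+ n) b.
  by move=> lb; apply/commute_sym/commuteX/commute_sym; apply: commute_powprod lb.
have ac : commute (a ^+ r) (c ^+ i) by apply/commuteX2/(powprod_commute lC la lc).
rewrite (expgMn _ (wX _ _ la)) -mulgA ac mulgA expgnAC -(expgMn _ (wX _ _ lc)) wcd.
by apply: powprodM (powprodX _ lC ld) (powprodX _ lC la).
Qed.

Lemma kills_torsion_cons_root w l r c d M : commuting (w :: l) ->
  powprod l c -> powprod l d -> w ^+ r * c = d ->
  kills_torsion (powprod l) M -> kills_torsion (powprod (w :: l)) (r * M).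
Proof.
move=> wlC lc ld wcd tM _ _ n [i [a' la' ->]] [j [b' lb' ->]] n_gt0.
have [lC _] := commuting_cons wlC.
have lift u : powprod l u -> powprod (w :: l) u.
  by move=> lu; exists 0%N; exists u; rewrite ?mul1g.
(* Twisting by powers of [c] moves [a ^+ r] and [b ^+ r] into [powprod l]. *)
have la := powprodM lC (powprod_cons_root wlC lc ld wcd i la') (powprodX j lC lc).
have lb := powprodM lC (powprod_cons_root wlC lc ld wcd j lb') (powprodX i lC lc).
rewrite -mulgA -expgnDr in la; rewrite -mulgA -expgnDr addnC in lb.
have expE u m : powprod (w :: l) u ->
    (u ^+ r * c ^+ (i + j)) ^+ m = u ^+ (r * m) * c ^+ ((i + j) * m).
  move=> wlu; rewrite !expgnA; apply/expgMn/commuteX2.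
  by apply: (powprod_commute wlC) => //; apply: lift.
have wla : powprod (w :: l) (w ^+ i * a') by exists i; exists a'.
have wlb : powprod (w :: l) (w ^+ j * b') by exists j; exists b'.
move=> abn; have := tM _ _ n la lb n_gt0; rewrite !expE // !(mulnC r) !expgnA abn.
by move=> /(_ erefl)/mulIg.
Qed.

Lemma kills_torsion_cons_free w l M : commuting (w :: l) ->
  (forall r c d, 0 < r -> powprod l c -> powprod l d -> w ^+ r * c <> d) ->
  kills_torsion (powprod l) M -> kills_torsion (powprod (w :: l)) M.
Proof.
move=> wlC free tM _ _ n [i [a' la' ->]] [j [b' lb' ->]] n_gt0.
have [lC wC] := commuting_cons wlC.
have wX b k : powprod l b -> commute (w ^+ k) b.
  by move=> lb; apply/commute_sym/commuteX/commute_sym; apply: commute_powprod lb.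
rewrite !(expgMn _ (wX _ i la')) !(expgMn _ (wX _ j lb')) -!expgnA.
wlog ij : i j a' b' la' lb' / i <= j => [wl|].
  by case: (leqP i j) => [|/ltnW] ij abn; [|apply/esym]; apply: wl => //; apply/esym.
rewrite -(subnKC ij) mulnDl expgnDr -mulgA => /mulgI abn.
have ji : (j - i = 0)%N.
  apply/eqP; rewrite -leqn0 leqNgt; apply/negP => ij'.
  apply: (free _ _ _ _ (powprodX n lC lb') (powprodX n lC la')) (esym abn).
  by rewrite muln_gt0 ij'.
by move: abn; rewrite ji mul0n expg0 mul1g addn0 => /(tM _ _ _ la' lb' n_gt0) ->.
Qed.

Lemma powprod_kills_torsion l :
  commuting l -> exists2 M, 0 < M & kills_torsion (powprod l) M.
Proof.
elim: l => [_|w l IH wlC].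
  by exists 1%N => // a b n /= -> ->.
have [M M_gt0 tM] := IH (commuting_cons wlC).1.
have [[r [c [d [r_gt0 lc ld wcd]]]] | free] :=
  pselect (exists r c d, [/\ 0 < r, powprod l c, powprod l d & w ^+ r * c = d]).
  exists (r * M)%N; first by rewrite muln_gt0 r_gt0.
  exact: kills_torsion_cons_root wlC lc ld wcd tM.
exists M => //; apply: kills_torsion_cons_free wlC _ tM => r c d r_gt0 lc ld wcd.
by apply: free; exists r, c, d.
Qed.

Definition subgroup_set N :=
  [/\ N 1, forall a b, N a -> N b -> N (a * b) & forall a, N a -> N a^-1].
Definition torsionfree_set N := forall a n, N a -> 0 < n -> a ^+ n = 1 -> a = 1.
Definition commutative_set N := forall a b, N a -> N b -> commute a b.
Definition normal_set N := forall a g, N a -> N (a ^ g).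
Definition tf_abelian_normal_fc N := [/\ subgroup_set N, torsionfree_set N,
  commutative_set N, normal_set N & N `<=` fc].

Lemma powprod_subgroup l : commuting l -> (forall u, u \in l -> u^-1 \in l) ->
  subgroup_set (powprod l).
Proof.
move=> lC lV; split; [exact: powprod1 | exact: powprodM |].
have sub : powprod l `<=` [set a | powprod l a^-1].
  apply: powprod_min => [|a b /= la lb|w /lV/powprod_mem //].
    by rewrite /= invg1; apply: powprod1.
  by rewrite invgM; apply: powprodM.
by move=> a la; apply: sub la.
Qed.

Lemma powprod_normal l : commuting l -> (forall u g, u \in l -> u ^ g \in l) ->
  normal_set (powprod l).
Proof.
move=> lC lJ a g la.
suff sub : powprod l `<=` [set a | powprod l (a ^ g)] by apply: sub la.
apply: powprod_min => [|b c /= lb lc|w /(lJ _ g)/powprod_mem //].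
  by rewrite /= conj1g; apply: powprod1.
by rewrite conjMg; apply: powprodM.
Qed.

Lemma powprod_fc l : (forall w, w \in l -> fc w) -> powprod l `<=` fc.
Proof. by apply: powprod_min; [exact: fc1 | exact: fcM]. Qed.

Lemma exp_image_tf_abelian_normal_fc A M : 0 < M ->
  subgroup_set A -> commutative_set A -> normal_set A -> A `<=` fc ->
  kills_torsion A M -> tf_abelian_normal_fc [set a ^+ M | a in A].
Proof.
move=> M_gt0 [A1 AM AV] AC AJ Afc tM; split.
- split; first by exists 1; rewrite ?expg1n.
    by move=> _ _ [a Aa <-] [b Ab <-]; exists (a * b); rewrite ?expgMn; auto.
  by move=> _ [a Aa <-]; exists a^-1; rewrite ?expVgn; auto.
- move=> _ n [a Aa <-] n_gt0; rewrite -expgnA => aMn.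
  have := tM a 1 (M * n)%N Aa A1; rewrite muln_gt0 M_gt0 n_gt0 expg1n aMn.
  by move=> /(_ isT erefl); rewrite expg1n.
- by move=> _ _ [a Aa <-] [b Ab <-]; apply/commuteX2/AC.
- by move=> _ g [a Aa <-]; exists (a ^ g); rewrite ?conjXg; auto.
- by move=> _ [a Aa <-]; apply/fcX/Afc.
Qed.

Lemma fc_commuting_class_span z : fc z -> (forall g h, commute (z ^ g) (z ^ h)) ->
  exists A, [/\ A z, subgroup_set A, commutative_set A, normal_set A & A `<=` fc]
    /\ exists2 M, 0 < M & kills_torsion A M.
Proof.
move=> /[dup] fz /fc_class[K hK] zC; pose l := K ++ [seq k^-1 | k <- K].
have mem_l u : u \in l <-> exists g, u = z ^ g \/ u = (z ^ g)^-1.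
  rewrite mem_cat; split.
    case/orP=> [/hK[g ->] | /mapP[_ /hK[g ->] ->]]; first by exists g; left.
    by exists g; right.
  by case=> g [->|->]; apply/orP; [left | right; apply: map_f]; apply/hK; exists g.
have lC : commuting l.
  move=> _ _ /mem_l[g [->|->]] /mem_l[h [->|->]].
  - exact: zC.
  - exact/commuteV/zC.
  - exact/commuteVl/zC.
  - exact/commuteVl/commuteV/zC.
have lV u : u \in l -> u^-1 \in l.
  move=> /mem_l[g [->|->]]; apply/mem_l; exists g; first by right.
  by left; rewrite invgK.
have lJ u h : u \in l -> u ^ h \in l.
  move=> /mem_l[g [->|->]]; apply/mem_l; exists (g * h); rewrite conjgM; first by left.
  by right; rewrite conjVg.
have lfc u : u \in l -> fc u by move=> /mem_l[g [->|->]]; [exact: fcJ | exact/fcV/fcJ].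
have [M M_gt0 tM] := powprod_kills_torsion lC.
exists (powprod l); split; last by exists M.
split; [|exact: powprod_subgroup | exact: powprod_commute | exact: powprod_normal |
  exact: powprod_fc].
by apply/powprod_mem/mem_l; exists 1; left; rewrite conjg1.
Qed.

Lemma fc_exp_commuting_class y : fc y ->
  exists2 d, 0 < d & forall g h, commute ((y ^+ d) ^ g) ((y ^+ d) ^ h).
Proof.
move=> /[dup] fy /fc_class[K hK].
have Kfc k : k \in K -> fc k by move=> /hK[g ->]; exact: fcJ.
have [d d_gt0 KC] := fc_commuteX_seq y Kfc.
have zC c : commute (y ^+ d) ((y ^+ d) ^ c).
  by rewrite conjXg; apply/commuteX/commute_sym/KC/hK; exists c.
exists d => // g h; rewrite -[h](mulgVK g) conjgM.
exact/commuteJ/zC.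
Qed.

Theorem fc_exp_in_tf_abelian_normal_fc y : fc y ->
  exists2 k, 0 < k & exists2 N, N (y ^+ k) & tf_abelian_normal_fc N.
Proof.
move=> fy; have [d d_gt0 zC] := fc_exp_commuting_class fy.
have [A [[Az sA cA nA Afc] [M M_gt0 tM]]] := fc_commuting_class_span (fcX d fy) zC.
exists (d * M)%N; first by rewrite muln_gt0 d_gt0.
exists [set a ^+ M | a in A]; first by exists (y ^+ d); rewrite ?expgnA.
exact: exp_image_tf_abelian_normal_fc.
Qed.

End FiniteConjugacyClasses.

Section ProbabilityFacts.
Context {R : realType} {d : measure_display} {T : measurableType d}.
Local Open Scope ring_scope.
Local Open Scope ereal_scope.

Lemma probability_no_trivIset_lbound (mu : probability T R) (F : nat -> set T) (rho : R) :
  (0 < rho)%R -> (forall i, measurable (F i)) -> trivIset setT F ->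
  ~ (forall i, rho%:E <= mu (F i)).
Proof.
move=> rho_gt0 mF tF Fge.
pose n := (Num.truncn rho^-1).+1.
have n_big : (1 < n%:R * rho)%R by rewrite -ltr_pdivrMr // div1r truncnS_gt.
have mU : measurable (\big[setU/set0]_(i < n) F i).
  by apply: bigsetU_measurable => i _; apply: mF.
have := probability_le1 mu mU; rewrite measure_bigsetU // => /(le_trans _).
move=> /(_ _ (lee_sum _ (fun (i : 'I_n) _ => Fge i))).
by rewrite sumEFin sumr_const card_ord -mulr_natl lee_fin leNgt n_big.
Qed.

(* No measurability of [f] is needed: a positive integral is witnessed by a
   simple function below [f]. *)
Lemma integral_gt0_superlevel (mu : {measure set T -> \bar R}) (f : T -> \bar R) :
  (forall x, 0 <= f x) -> 0 < \int[mu]_(x in [set: T]) f x ->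
  exists B r, [/\ measurable B, 0 < mu B, (0 < r)%R & forall x, B x -> r%:E <= f x].
Proof.
move=> f_ge0; rewrite ge0_integralTE // => /ereal_sup_gt[_ [h hf <-]].
rewrite sintegralEnnsfun => /fsume_gt0[r /= r_gt0].
rewrite pmule_rgt0 ?lte_fin // => mu_gt0.
exists (h @^-1` [set r]), r; split => // x /= <-; exact: hf.
Qed.

End ProbabilityFacts.

Section CompactGroup.
Variables (G : ptopologicalType) (cg : compact_group G).

Lemma gmulgV : right_inverse (gone cg) (ginv cg) (gmul cg).
Proof.
move=> a; rewrite -[gmul cg a _](gmul1 cg) -(gmulV cg (ginv cg a)) -gmulA.
by rewrite (gmulA cg (ginv cg a)) gmulV gmul1 gmulV.
Qed.

Lemma gmulg1 : right_id (gone cg) (gmul cg).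
Proof. by move=> a; rewrite -(gmulV cg a) gmulA gmulgV gmul1. Qed.

(* The unused argument keys the group instance on [cg].  In [cgroup_of cg] the
   predicates [FC cg] and [centralizer cg] are [fc] and [commute] by conversion. *)
Definition cgroup_of of compact_group G : Type := G.
Local Notation cgroup := (cgroup_of cg).
HB.instance Definition _ := Choice.on cgroup.
HB.instance Definition _ := isGroup.Build cgroup
  (@gmulA _ cg) (@gmul1 _ cg) gmulg1 (@gmulV _ cg) gmulgV.

Lemma gpowE (y : cgroup) n : gpow cg y n = (y ^+ n)%g.
Proof. by elim: n => // n IH; rewrite expgS -IH. Qed.

Lemma cgroup_tf_abelian_normal_fc (N : set cgroup) : tf_abelian_normal_fc N ->
  [/\ abstract_subgroup cg N, torsion_free cg N, abelian_set cg N &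
      normal_in_G cg N /\ N `<=` FC cg].
Proof.
case=> sN tN cN nN Nfc; split=> // [y n Ny n_gt0|]; first by rewrite gpowE; exact: tN.
by split=> // g a /(nN a ((g : cgroup)^-1)%g); rewrite conjgE invgK mulgA.
Qed.

Lemma lmul_continuous (g : G) : continuous (gmul cg g).
Proof.
move=> z; apply: (@continuous2_cvg _ _ _ _ _ _ (fun _ => g) id (gmul cg) g z).
- by move: (@gmul_cont _ cg (g, z)).
- exact: cvg_cst.
- exact: cvg_id.
Qed.

Lemma rmul_continuous (g : G) : continuous (gmul cg ^~ g).
Proof.
move=> z; apply: (@continuous2_cvg _ _ _ _ _ _ id (fun _ => g) (gmul cg) z g).
- by move: (@gmul_cont _ cg (z, g)).
- exact: cvg_id.
- exact: cvg_cst.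
Qed.

Lemma centralizer_closed (h : G) : closed (centralizer cg h).
Proof.
move=> g gcl; apply: (g_hausdorff cg) => A B hA hB.
have n1 : nbhs g (gmul cg h @^-1` A) by apply: lmul_continuous.
have n2 : nbhs g (gmul cg ^~ h @^-1` B) by apply: rmul_continuous.
have [z [zC [zA zB]]] := gcl _ (filterI n1 n2).
by exists (gmul cg h z); split => //; rewrite zC.
Qed.

Lemma continuous_measurable_preimage (f : G -> G) (A : set (Borel G)) :
  continuous f -> measurable A -> measurable (f @^-1` A : set (Borel G)).
Proof.
move=> fC mA.
have mf : measurable_fun [set: Borel G] (f : Borel G -> Borel G).
  apply: (@measurability _ _ (Borel G) (Borel G) _ _ (@open G)) => // _ [B oB <-].
  by apply: sub_sigma_algebra; rewrite setTI; apply: open_comp => // x _; apply: fC.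
by have := mf measurableT A mA; rewrite setTI.
Qed.

Lemma closed_Borel_measurable (C : set G) : closed C -> measurable (C : set (Borel G)).
Proof.
move=> cC; rewrite -(setCK C); apply: measurableC; apply: sub_sigma_algebra.
exact: closed_openC.
Qed.

Lemma translate_measurable (g : cgroup) (A : set (Borel G)) :
  measurable A -> measurable ([set g * a | a in A]%g : set (Borel G)).
Proof.
have -> : [set g * a | a in A]%g = (fun z => g^-1 * z)%g @^-1` A.
  apply/seteqP; split=> [_ [a Aa <-]|z Az]; first by rewrite /= mulKg.
  by exists (g^-1 * z)%g; [exact: Az | rewrite mulVKg].
by move=> mA; apply: continuous_measurable_preimage => //; apply: lmul_continuous.
Qed.

Variable R : realType.
Local Open Scope ring_scope.

Lemma FC_of_centralizer_measure (muG : probability (Borel G) R) (h : G) (rho : R) :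
  haar_of cg [set: G] muG -> 0 < rho ->
  (rho%:E <= muG (centralizer cg h : set (Borel G)))%E -> FC cg h.
Proof.
move=> [_ muG_inv _ _] rho_gt0 hC.
apply: contrapT => /(@not_fc_distinct_cosets cgroup)[g gC].
pose C : set (Borel G) := centralizer cg h.
have mC : measurable C := closed_Borel_measurable (@centralizer_closed h).
apply: (@probability_no_trivIset_lbound _ _ _ muG
  (fun i => [set g i * a | a in C]%g) rho) => //.
- by move=> i; apply: translate_measurable.
- move=> i j _ _ /(@translate_meet cgroup)[a [b [Ca Cb gij]]].
  have [//|/gC nC] := eqVneq i j; exfalso; apply: nC; rewrite gij.
  by apply: commuteM; last apply: commuteV.
- by move=> i; rewrite muG_inv.
Qed.

Lemma FC_exp_of_positive_measure (muH : probability (Borel G) R) (x : G)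
    (B : set (Borel G)) :
  haar_of cg (topgen cg x) muH -> measurable B -> (0 < muH B)%E -> B `<=` FC cg ->
  exists2 e, (0 < e)%N & FC cg (gpow cg x e).
Proof.
move=> [_ muH_inv _ _] mB B_gt0 BFC; apply: contrapT => noFC.
have muB : muH B = (fine (muH B))%:E.
  rewrite fineK // ge0_fin_numE ?measure_ge0 //.
  by rewrite (le_lt_trans (probability_le1 muH mB)) ?ltry.
apply: (@probability_no_trivIset_lbound _ _ _ muH
  (fun i => [set (gpow cg x i : cgroup) * b | b in B]%g) (fine (muH B))).
- by rewrite -lte_fin -muB.
- by move=> i; apply: translate_measurable.
- move=> i j _ _ /(@translate_meet cgroup)[a [b [Ba Bb xij]]].
  have [//|ij] := eqVneq i j; exfalso; apply: noFC.
  have fq : fc (((x : cgroup) ^+ i)^-1 * (x : cgroup) ^+ j)%g.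
    by rewrite -!gpowE xij; apply: fcM; [apply: BFC | apply/fcV/BFC].
  by have [e e_gt0 xe] := fc_exp_of_quotient ij fq; exists e; rewrite ?gpowE.
- move=> i; rewrite muH_inv // -?muB //.
  by apply: subset_closure; exists i; left.
Qed.

Lemma comm_prob_gt0_FC (muH muG : probability (Borel G) R) :
  haar_of cg [set: G] muG -> (0 < comm_prob cg muH muG)%E ->
  exists B : set (Borel G), [/\ measurable B, (0 < muH B)%E & B `<=` FC cg].
Proof.
move=> hG /(integral_gt0_superlevel (fun h => measure_ge0 _ _)).
move=> [B [r [mB B_gt0 r_gt0 Br]]].
by exists B; split=> // h /Br; apply: FC_of_centralizer_measure hG r_gt0.
Qed.

End CompactGroup.

Local Open Scope ring_scope.

Theorem lemma2p2 (R : realType) (G : ptopologicalType) (cg : compact_group G)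
  (x : G) :
  (exists (muH muG : probability (Borel G) R),
      [/\ haar_of cg (topgen cg x) muH, haar_of cg [set: G] muG &
          (0 < comm_prob cg muH muG)%E]) ->
  exists e : nat, (0 < e)%N /\
    exists N : set G,
      [/\ N (gpow cg x e), abstract_subgroup cg N, torsion_free cg N,
          abelian_set cg N & normal_in_G cg N /\ N `<=` FC cg].
Proof.
move=> [muH [muG [hH hG hpos]]].
have [B [mB B_gt0 BFC]] := comm_prob_gt0_FC hG hpos.
have [e e_gt0 xeFC] := FC_exp_of_positive_measure hH mB B_gt0 BFC.
have [k k_gt0 [N Nxek /cgroup_tf_abelian_normal_fc[sN tN cN nN]]] :=
  @fc_exp_in_tf_abelian_normal_fc (cgroup_of cg) _ xeFC.
exists (e * k)%N; split; first by rewrite muln_gt0 e_gt0.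
by exists N; split=> //; rewrite gpowE expgnA -(gpowE (x : cgroup_of cg) e).
Qed.
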